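(* Let $r\ge 10$ be an even integer, let $k\ge 1$, and let $Q\subseteq\mathrm{VE}(G_k)$ be such that $\mu_1\notin\mathrm{VE}(G_{2r+1}(\mu_2))$ for all distinct $\mu_1,\mu_2\in Q$. Then for every $\mu\in\mathrm{VE}(G_k)$, \[ \bigl|\{\mu_1\in Q:\mu\in\mathrm{VE}(G_{3r+1}(\mu_1))\}\bigr|\le 16. \]
   Context: The grid $G_k$ has vertex set $\{1,\dots,k\}^2$, with $(i_1,j_1)$ and $(i_2,j_2)$ adjacent iff $|i_1-i_2|+|j_1-j_2|=1$. For a graph $H$, $\mathrm{VE}(H):=V(H)\cup E(H)$. For a vertex $v=(i,j)$ of $G_k$ and integer $s\ge 0$, $B_s(v):=(\{i-s,\dots,i+s\}\times\{j-s,\dots,j+s\})\cap V(G_k)$; for an edge $vw$ of $G_k$, $B_s(vw):=B_s(v)\cup B_s(w)$; and $G_s(\mu):=G_k[B_s(\mu)]$ is the induced subgraph, for $\mu\in\mathrm{VE}(G_k)$. *)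

From mathcomp Require Import all_boot.
Set Implicit Arguments. Unset Strict Implicit. Unset Printing Implicit Defensive.

(* Vertices of the grid G_k: the pair (i, j) : 'I_k * 'I_k stands for the
   vertex (i+1, j+1) of {1..k}^2 (a translation, irrelevant for all notions below). *)
Definition gvtx (k : nat) : finType := ('I_k * 'I_k)%type.

Definition ndist (a b : nat) : nat := (a - b) + (b - a).

Definition gadj k (v w : gvtx k) : bool :=
  ndist v.1 w.1 + ndist v.2 w.2 == 1.

(* Candidate elements of VE(G_k): a vertex (inl) or a 2-set of vertices (inr). *)
Definition gitem (k : nat) : finType := (gvtx k + {set gvtx k})%type.

Definition is_gedge k (e : {set gvtx k}) : bool :=
  [exists v, exists w, gadj v w && (e == [set v; w])].

Definition inVE k (x : gitem k) : bool :=
  match x with inl _ => true | inr e => is_gedge e end.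

Definition ballv k (s : nat) (v : gvtx k) : {set gvtx k} :=
  [set u : gvtx k | (ndist u.1 v.1 <= s) && (ndist u.2 v.2 <= s)].

Definition ball k (s : nat) (mu : gitem k) : {set gvtx k} :=
  match mu with
  | inl v => ballv s v
  | inr e => \bigcup_(v in e) ballv s v
  end.

(* x ∈ VE(G_s(mu)), where G_s(mu) = G_k[B_s(mu)] is the induced subgraph *)
Definition inVE_G k (s : nat) (mu x : gitem k) : bool :=
  match x with
  | inl v => v \in ball s mu
  | inr e => is_gedge e && (e \subset ball s mu)
  end.

(* Fix a vertex p of mu.  Every mu1 counted has a vertex within Chebyshev
   distance 3r+1 of p, so these anchor vertices lie in a square of side 6r+3
   around p.  Cut that square into 3 x 3 blocks of side 2r+1: two anchors in the
   same block are at distance at most 2r, so the (2r+1)-ball of one element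
   would contain the other, which the separation hypothesis forbids.  Hence at
   most one counted element per block, i.e. at most 9 <= 16 of them. *)

From mathcomp Require Import all_boot.
From mathcomp Require Import zify.
Set Implicit Arguments. Unset Strict Implicit.

Lemma ndistC a b : ndist a b = ndist b a.
Proof. by rewrite /ndist addnC. Qed.

(* Index of the length-d block of the window [y - t, y + t] containing x. *)
Definition block (d t y x : nat) : nat := (x + t - y) %/ d.

Lemma block_lt d t n x y : ndist x y <= t -> 2 * t < n * d -> block d t y x < n.
Proof.
move=> xy tnd; rewrite /block ltn_divLR; last by case: d tnd; rewrite ?muln0.
by move: xy; rewrite /ndist; lia.
Qed.

Lemma block_inj d t x x' y : 0 < d -> ndist x y <= t -> ndist x' y <= t ->
  block d t y x = block d t y x' -> ndist x x' < d.
Proof.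
rewrite /block /ndist => d_gt0 xy x'y eq_q.
have := divn_eq (x + t - y) d; have := divn_eq (x' + t - y) d.
have := ltn_pmod (x + t - y) d_gt0; have := ltn_pmod (x' + t - y) d_gt0.
rewrite eq_q; move: (_ %/ d * d) => q; lia.
Qed.

Section Grid.

Variable k : nat.
Implicit Types (a b c p u v w x y : gvtx k) (mu : gitem k) (s t : nat).

Lemma ballvE s u v :
  (u \in ballv s v) = (ndist u.1 v.1 <= s) && (ndist u.2 v.2 <= s).
Proof. by rewrite inE. Qed.

Lemma ballv_trans s t u v w :
  u \in ballv s v -> v \in ballv t w -> u \in ballv (s + t) w.
Proof. by rewrite !ballvE /ndist => /andP[? ?] /andP[? ?]; apply/andP; split; lia. Qed.

Lemma ballvS s t v : s <= t -> {subset ballv s v <= ballv t v}.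
Proof. by move=> st u; rewrite !ballvE => /andP[? ?]; apply/andP; split; lia. Qed.

Lemma gadj_ballv a b x y : gadj a b -> x \in [set a; b] -> y \in [set a; b] ->
  x \in ballv 1 y.
Proof.
rewrite /gadj ballvE /ndist => /eqP ab.
by rewrite !inE => /orP[] /eqP -> /orP[] /eqP ->; apply/andP; split; lia.
Qed.

Definition verts mu : {set gvtx k} :=
  match mu with inl v => [set v] | inr e => e end.

Lemma ballP s mu u :
  reflect (exists2 v, v \in verts mu & u \in ballv s v) (u \in ball s mu).
Proof.
case: mu => [v|e] /=; last by apply: (iffP bigcupP) => -[w]; exists w.
apply: (iffP idP) => [uv|[w]]; first by exists v; rewrite ?in_set1.
by rewrite in_set1 => /eqP ->.
Qed.

Lemma verts_inVE mu : inVE mu -> exists p, p \in verts mu.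
Proof.
case: mu => [v|e] /=; first by exists v; rewrite in_set1.
by case/existsP=> a /existsP[b /andP[_ /eqP ->]]; exists a; rewrite !inE eqxx.
Qed.

Lemma inVE_G_verts s mu1 mu p :
  inVE_G s mu1 mu -> p \in verts mu -> p \in ball s mu1.
Proof.
case: mu => [v|e] /=; first by move=> pv; rewrite in_set1 => /eqP ->.
by case/andP=> _ /subsetP; apply.
Qed.

Lemma inVE_G_near s mu1 mu2 c1 c2 : inVE mu1 ->
  c1 \in verts mu1 -> c2 \in verts mu2 -> c1 \in ballv s c2 ->
  inVE_G s.+1 mu2 mu1.
Proof.
case: mu1 => [v|e] /= edge_e c1_mu1 c2_mu2 c1c2.
  move: c1_mu1 c1c2; rewrite in_set1 => /eqP -> vc2.
  by apply/ballP; exists c2; last exact: ballvS vc2.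
rewrite edge_e; apply/subsetP=> x xe; apply/ballP; exists c2 => //.
case/existsP: edge_e c1_mu1 xe => a /existsP[b /andP[ab /eqP ->]] c1e xe.
by rewrite -add1n; apply: ballv_trans c1c2; apply: gadj_ballv ab xe c1e.
Qed.

Definition anchor t p mu1 : gvtx k :=
  odflt p [pick c in verts mu1 | p \in ballv t c].

Lemma anchorP t p mu1 : p \in ball t mu1 ->
  anchor t p mu1 \in verts mu1 /\ p \in ballv t (anchor t p mu1).
Proof.
case/ballP=> c c_mu1 pc; rewrite /anchor.
by case: pickP => [c' /andP[] //|/(_ c)]; rewrite c_mu1 pc.
Qed.

Definition cell s t p c : nat * nat :=
  (block s.+1 t p.1 c.1, block s.+1 t p.2 c.2).

Lemma cell_inj s t p c c' : p \in ballv t c -> p \in ballv t c' ->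
  cell s t p c = cell s t p c' -> c \in ballv s c'.
Proof.
rewrite !ballvE ![ndist p.1 _]ndistC ![ndist p.2 _]ndistC.
move=> /andP[c1 c2] /andP[c'1 c'2] [eq1 eq2].
by apply/andP; split; [exact: block_inj eq1 | exact: block_inj eq2].
Qed.

Lemma card_near_separated s t n (Q : {set gitem k}) mu :
  2 * t < n * s.+1 ->
  (forall mu1, mu1 \in Q -> inVE mu1) ->
  (forall mu1 mu2, mu1 \in Q -> mu2 \in Q -> mu1 != mu2 ->
     ~~ inVE_G s.+1 mu2 mu1) ->
  inVE mu -> #|[set mu1 in Q | inVE_G t mu1 mu]| <= n ^ 2.
Proof.
case: n => [|n] tn Q_VE Q_sep /verts_inVE[p p_mu]; first by rewrite mul0n in tn.
set S := [set mu1 in Q | _].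
have anchorS mu1 : mu1 \in S ->
    [/\ mu1 \in Q, anchor t p mu1 \in verts mu1 & p \in ballv t (anchor t p mu1)].
  by rewrite inE => /andP[Q_mu1 /inVE_G_verts/(_ p_mu)/anchorP[]].
have cell_lt c : p \in ballv t c -> (cell s t p c).1 < n.+1 /\ (cell s t p c).2 < n.+1.
  by rewrite ballvE !(ndistC p.1, ndistC p.2) => /andP[? ?]; split; apply: block_lt tn.
pose f mu1 := let c := anchor t p mu1 in
  ((inord (cell s t p c).1 : 'I_n.+1), (inord (cell s t p c).2 : 'I_n.+1)).
have f_inj : {in S &, injective f}.
  move=> mu1 mu2 /anchorS[Q1 c1 pc1] /anchorS[Q2 c2 pc2] [eq1 eq2].
  apply/eqP/negPn/negP=> /(Q_sep _ _ Q1 Q2)/negP; apply.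
  apply: inVE_G_near (Q_VE _ Q1) c1 c2 (cell_inj pc1 pc2 _).
  have [lt1 lt2] := cell_lt _ pc1; have [lt1' lt2'] := cell_lt _ pc2.
  move/(congr1 val): eq1; move/(congr1 val): eq2; rewrite /= !inordK //.
  by rewrite /cell => -> ->.
rewrite -(card_in_imset f_inj); apply: leq_trans (max_card _) _.
by rewrite card_prod card_ord.
Qed.

End Grid.

(* The bound 9 holds for every r. *)
Theorem lemma13 (r k : nat) :
  ~~ odd r -> 10 <= r -> 1 <= k ->
  forall Q : {set gitem k},
    (forall mu, mu \in Q -> inVE mu) ->
    (forall mu1 mu2, mu1 \in Q -> mu2 \in Q -> mu1 != mu2 ->
       ~~ inVE_G (2 * r + 1) mu2 mu1) ->
    forall mu : gitem k, inVE mu ->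
      #|[set mu1 in Q | inVE_G (3 * r + 1) mu1 mu]| <= 16.
Proof.
move=> _ _ _ Q Q_VE Q_sep mu mu_VE.
have tn : 2 * (3 * r + 1) < 3 * (2 * r).+1 by lia.
rewrite addn1 in Q_sep.
exact: leq_trans (card_near_separated tn Q_VE Q_sep mu_VE) _.
Qed.
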